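(* Let $\mathcal{H}$ be a Hilbert space, $0<\mu<1$, and let $A\ge0$ and $B$ be bounded operators on $\mathcal{H}$ satisfying $[B,B^*]=(1-\mu)A$ and $A+B^*B=1$. Then $\ker(B)=\{0\}$ if and only if $A=0$.
   Context: $[B,B^*]=BB^*-B^*B$; $A\ge 0$ means $A$ is a positive operator. *)

From HB Require Import structures.
From mathcomp Require Import all_boot all_order all_algebra.
From mathcomp Require Import reals.
From mathcomp.real_closed Require Import complex.
Set Implicit Arguments. Unset Strict Implicit. Unset Printing Implicit Defensive.
Import Order.TTheory GRing.Theory Num.Theory.
Local Open Scope ring_scope.

Section Hilbert.
Variables (R : realType) (V : lmodType R[i]).

Definition is_inner_product (ip : V -> V -> R[i]) : Prop :=
  [/\ (forall (a : R[i]) (x y z : V), ip (a *: x + y) z = a * ip x z + ip y z),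
      (forall x y : V, ip y x = (ip x y)^*)%C,
      (forall x : V, 0 <= ip x x) &
      (forall x : V, ip x x = 0 -> x = 0)].

Definition hnorm (ip : V -> V -> R[i]) (x : V) : R := Num.sqrt (@complex.Re R (ip x x)).

Definition hcomplete (ip : V -> V -> R[i]) : Prop :=
  forall u : nat -> V,
    (forall eps : R, 0 < eps -> exists N : nat, forall m n : nat,
        (N <= m)%N -> (N <= n)%N -> hnorm ip (u m - u n) < eps) ->
    exists l : V, forall eps : R, 0 < eps -> exists N : nat, forall n : nat,
        (N <= n)%N -> hnorm ip (u n - l) < eps.

Definition is_hilbert (ip : V -> V -> R[i]) : Prop :=
  is_inner_product ip /\ hcomplete ip.

Definition bounded_op (ip : V -> V -> R[i]) (T : V -> V) : Prop :=
  (forall (a : R[i]) (x y : V), T (a *: x + y) = a *: T x + T y) /\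
  (exists M : R, forall x : V, hnorm ip (T x) <= M * hnorm ip x).

Definition is_adjoint (ip : V -> V -> R[i]) (T Ts : V -> V) : Prop :=
  forall x y : V, ip (T x) y = ip x (Ts y).

Definition positive_op (ip : V -> V -> R[i]) (A : V -> V) : Prop :=
  forall x : V, 0 <= ip (A x) x.

End Hilbert.

From HB Require Import structures.
From mathcomp Require Import all_boot all_order all_algebra.
From mathcomp Require Import reals.
From mathcomp.real_closed Require Import complex.
From mathcomp Require Import classical_sets.
From mathcomp Require Import lra.
Set Implicit Arguments. Unset Strict Implicit. Unset Printing Implicit Defensive.
Import Order.TTheory GRing.Theory Num.Theory.
Local Open Scope ring_scope.
Local Open Scope complex_scope.

(* From A + B*B = 1 and BB* - B*B = (1 - mu) A one gets BB* = 1 - mu A, hence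
   the intertwining relations BA = mu AB and AB* = mu B*A, and 0 <= A^2 <= A <= 1
   as quadratic forms.  If ker B = 0, the sequence <A^n z, z> is nonincreasing,
   so A^n z converges to a fixed point of A; such a point lies in ker B, hence
   A^n z -> 0.  As z - A^n z lies in ran B*, the range of B* is dense.  On ran B*
   the intertwining relations improve a bound <Ax, x> <= c |x|^2 to
   <Ax, x> <= mu c |x|^2, by density this holds everywhere, and iterating gives
   <Ax, x> <= mu^k |x|^2 for all k, i.e. A = 0.  Conversely A = 0 means B*B = 1. *)

Lemma even_or_odd k : exists m, k = (m + m)%N \/ k = (m + m).+1.
Proof.
exists k./2; have := odd_double_half k; rewrite -addnn; set m := k./2.
by case: (odd k) => <-; [right | left].
Qed.

Section RealLemmas.
Variable R : realType.

Lemma ler_addgt0Mr (x y c : R) : (forall e, 0 < e -> x <= y + e * c) -> x <= y.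
Proof.
move=> small; apply/ler_addgt0Pr => e e0.
have c1 : 0 < `|c| + 1 by rewrite ltr_wpDl.
pose d := e / (`|c| + 1).
have d0 : 0 < d by rewrite divr_gt0.
have de : d * (`|c| + 1) = e by rewrite /d mulfVK // gt_eqF.
have dc : d * c <= d * `|c| by rewrite ler_pM2l // ler_norm.
have := small d d0; nra.
Qed.

Lemma bernoulli_ineq (q : R) k : 0 <= q -> 1 + k%:R * (q - 1) <= q ^+ k.
Proof.
move=> q0; elim: k => [|k IH]; first by rewrite mul0r addr0 expr0.
rewrite exprS -addn1 natrD.
have := ler_wpM2l q0 IH.
have : 0 <= (q - 1) * (k%:R * (q - 1)) by rewrite mulrCA mulr_ge0 // -expr2 sqr_ge0.
lra.
Qed.

Lemma le0_of_le_expr (q x y : R) :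
  0 < q -> q < 1 -> (forall k, x <= q ^+ k * y) -> x <= 0.
Proof.
move=> q0 q1 hx; rewrite leNgt; apply/negP => x0.
have p1 : 1 < q^-1 by rewrite invf_gt1.
have y0 : 0 <= y / ((q^-1 - 1) * x).
  by rewrite divr_ge0 ?mulr_ge0 ?ltW ?subr_gt0 // (lt_le_trans x0) // -[y]mul1r -(expr0 q).
have := archi_boundP y0; set k := Num.bound _.
rewrite ltr_pdivrMr ?mulr_gt0 ?subr_gt0 // => yk.
have := ler_wpM2l (exprn_ge0 k (ltW (lt_trans ltr01 p1))) (hx k).
rewrite mulrA -exprMn mulVf ?gt_eqF // expr1n mul1r.
have := ler_wpM2r (ltW x0) (bernoulli_ineq k (ltW (lt_trans ltr01 p1))).
lra.
Qed.

Lemma nonincreasing_cauchy (b : nat -> R) (lb : R) :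
  (forall k, b k.+1 <= b k) -> (forall k, lb <= b k) ->
  forall e, 0 < e -> exists K, forall j k, (K <= j)%N -> (K <= k)%N -> b j - b k < e.
Proof.
move=> bS blb e e0.
have b_homo : {homo b : j k / (j <= k)%N >-> k <= j}.
  by apply: homo_leq => // y x z yx zy; apply: le_trans zy yx.
have hE : has_inf (range b).
  by split; [exists (b 0%N), 0%N | exists lb => _ [k _ <-]].
have [_ [K _ <-] bK] := inf_adherent e0 hE.
exists K => j k Kj _.
have : inf (range b) <= b k by apply: (ge_inf hE.2); exists k.
have := b_homo _ _ Kj; lra.
Qed.

Lemma ReM_real (r : R) (w : R[i]) : complex.Re (r%:C * w) = r * complex.Re w.
Proof. by case: w => a b /=; rewrite mul0r subr0. Qed.

Lemma ReJ (w : R[i]) : complex.Re w^* = complex.Re w.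
Proof. by case: w. Qed.

Lemma Re_ge0 (w : R[i]) : 0 <= w -> 0 <= complex.Re w.
Proof. by rewrite lecE => /andP[]. Qed.

Lemma ge0_Re_eq0 (w : R[i]) : 0 <= w -> complex.Re w = 0 -> w = 0.
Proof. by move=> /ger0_real/RRe_real <- ->. Qed.

End RealLemmas.

Section RealInnerProduct.
Variables (R : realType) (V : lmodType R[i]) (ip : V -> V -> R[i]).
Hypothesis ipP : is_inner_product ip.

Definition rdot x y := complex.Re (ip x y).
Definition sqnorm x := rdot x x.

Lemma ipDl x y z : ip (x + y) z = ip x z + ip y z.
Proof. by case: ipP => ipZD _ _ _; rewrite -{1}[x]scale1r ipZD mul1r. Qed.

Lemma ip0l z : ip 0 z = 0.
Proof. by apply: (addrI (ip 0 z)); rewrite -ipDl !addr0. Qed.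

Lemma ipZl a x z : ip (a *: x) z = a * ip x z.
Proof. by case: ipP => ipZD _ _ _; rewrite -[a *: x]addr0 ipZD ip0l addr0. Qed.

Lemma ipNl x z : ip (- x) z = - ip x z.
Proof. by rewrite -scaleN1r ipZl mulN1r. Qed.

Lemma rdotC x y : rdot x y = rdot y x.
Proof. by case: ipP => _ ipC _ _; rewrite /rdot ipC ReJ. Qed.

Lemma rdotDl x y z : rdot (x + y) z = rdot x z + rdot y z.
Proof. by rewrite /rdot ipDl raddfD. Qed.

Lemma rdotNl x z : rdot (- x) z = - rdot x z.
Proof. by rewrite /rdot ipNl raddfN. Qed.

Lemma rdotBl x y z : rdot (x - y) z = rdot x z - rdot y z.
Proof. by rewrite rdotDl rdotNl. Qed.

Lemma rdotZl (r : R) x z : rdot (r%:C *: x) z = r * rdot x z.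
Proof. by rewrite /rdot ipZl ReM_real. Qed.

Lemma rdotDr x y z : rdot z (x + y) = rdot z x + rdot z y.
Proof. by rewrite rdotC rdotDl !(rdotC z). Qed.

Lemma rdotNr x z : rdot z (- x) = - rdot z x.
Proof. by rewrite rdotC rdotNl rdotC. Qed.

Lemma rdotBr x y z : rdot z (x - y) = rdot z x - rdot z y.
Proof. by rewrite rdotDr rdotNr. Qed.

Lemma rdotZr (r : R) x z : rdot z (r%:C *: x) = r * rdot z x.
Proof. by rewrite rdotC rdotZl rdotC. Qed.

Definition rdotE := (rdotDl, rdotDr, rdotNl, rdotNr, rdotZl, rdotZr).

Lemma sqnorm_ge0 x : 0 <= sqnorm x.
Proof. by case: ipP => _ _ ip_ge0 _; apply: Re_ge0. Qed.

Lemma sqnorm_eq0 x : sqnorm x = 0 -> x = 0.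
Proof. by case: ipP => _ _ ip_ge0 ip_eq0 /(ge0_Re_eq0 (ip_ge0 x)) /ip_eq0. Qed.

Lemma eq0_of_sqnorm_le x : (forall e, 0 < e -> sqnorm x <= e) -> x = 0.
Proof.
move=> small; apply: sqnorm_eq0; apply/eqP; rewrite eq_le sqnorm_ge0 andbT.
by apply/ler_addgt0Pr => e e0; rewrite add0r small.
Qed.

Lemma sqnormBC x y : sqnorm (x - y) = sqnorm (y - x).
Proof. by rewrite -opprB /sqnorm rdotNl rdotNr opprK. Qed.

Lemma sqnormD_le x y : sqnorm (x + y) <= 2 * sqnorm x + 2 * sqnorm y.
Proof. by have := sqnorm_ge0 (x - y); rewrite /sqnorm !rdotE (rdotC y x); lra. Qed.

Lemma rdot_le t x y : 0 < t -> 2 * t * `|rdot x y| <= t ^+ 2 * sqnorm x + sqnorm y.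
Proof.
move=> t0; have := sqnorm_ge0 (t%:C *: x - y); have := sqnorm_ge0 (t%:C *: x + y).
rewrite /sqnorm !rdotE (rdotC y x).
by case: (ger0P (rdot x y)) => *; lra.
Qed.

Lemma hnorm_lt x e : 0 < e -> (hnorm ip x < e) = (sqnorm x < e ^+ 2).
Proof. by move=> e0; rewrite -[_ < e ^+ 2]ltr_sqrt ?exprn_gt0 // sqrtr_sqr gtr0_norm. Qed.

Definition sqnorm_cauchy (u : nat -> V) := forall e, 0 < e ->
  exists K, forall m n, (K <= m)%N -> (K <= n)%N -> sqnorm (u m - u n) < e.

Definition sqnorm_cvg (u : nat -> V) l := forall e, 0 < e ->
  exists K, forall n, (K <= n)%N -> sqnorm (u n - l) < e.

Lemma hcomplete_cvg u : hcomplete ip -> sqnorm_cauchy u -> exists l, sqnorm_cvg u l.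
Proof.
move=> hcomp hu; have [e e0|l hl] := hcomp u.
  have [K hK] := hu _ (exprn_gt0 2 e0).
  by exists K => m n Km Kn; rewrite hnorm_lt ?hK.
exists l => e e0; have se0 : 0 < Num.sqrt e by rewrite sqrtr_gt0.
have [K hK] := hl _ se0; exists K => n Kn.
by have := hK n Kn; rewrite hnorm_lt // sqr_sqrtr // ltW.
Qed.

Section Operators.
Variables (mu : R) (A B Bs : {linear V -> V}).
Hypotheses (mu_gt0 : 0 < mu) (mu_lt1 : mu < 1).
Hypothesis adjB : is_adjoint ip B Bs.
Hypothesis A_ge0 : positive_op ip A.
Hypothesis commB : forall x, B (Bs x) - Bs (B x) = (1 - mu)%:C *: A x.
Hypothesis A_BsB : forall x, A x + Bs (B x) = x.

Definition qf x := rdot (A x) x.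

Lemma A_def x : A x = x - Bs (B x).
Proof. by rewrite -{2}(A_BsB x) addrK. Qed.

Lemma B_Bs x : B (Bs x) = x - mu%:C *: A x.
Proof.
rewrite -(subrK (Bs (B x)) (B (Bs x))) commB rmorphB scalerBl scale1r.
by rewrite addrAC A_BsB.
Qed.

Lemma B_A x : B (A x) = mu%:C *: A (B x).
Proof. by rewrite [A x]A_def linearB B_Bs opprB addrC subrK. Qed.

Lemma A_Bs x : A (Bs x) = mu%:C *: Bs (A x).
Proof. by rewrite A_def B_Bs linearB linearZ opprB addrC subrK. Qed.

Lemma rdot_adj x y : rdot (B x) y = rdot x (Bs y).
Proof. by rewrite /rdot adjB. Qed.

Lemma rdot_adjV x y : rdot (Bs x) y = rdot x (B y).
Proof. by rewrite rdotC -rdot_adj rdotC. Qed.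

Lemma rdotA x y : rdot (A x) y = rdot x (A y).
Proof. by rewrite !A_def rdotBl rdotBr rdot_adjV rdot_adj. Qed.

Lemma qf_ge0 x : 0 <= qf x.
Proof. exact: Re_ge0 (A_ge0 x). Qed.

Lemma sqnorm_B x : sqnorm (B x) = sqnorm x - qf x.
Proof. by rewrite /qf A_def rdotBl rdot_adjV opprB addrC subrK. Qed.

Lemma qf_le_sqnorm x : qf x <= sqnorm x.
Proof. by rewrite -subr_ge0 -sqnorm_B sqnorm_ge0. Qed.

Lemma qf_sub_sqnormA x : qf x - sqnorm (A x) = mu * qf (B x).
Proof.
rewrite /qf /sqnorm -rdotBr {2}A_def opprB addrC subrK.
by rewrite -rdot_adj B_A rdotZl.
Qed.

Lemma sqnormA_le_qf x : sqnorm (A x) <= qf x.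
Proof. by rewrite -subr_ge0 qf_sub_sqnormA mulr_ge0 ?qf_ge0 ?ltW. Qed.

Lemma sqnormA_le x : sqnorm (A x) <= sqnorm x.
Proof. exact: le_trans (sqnormA_le_qf x) (qf_le_sqnorm x). Qed.

Lemma rdot_iterA k n x y : rdot (iter k A x) (iter n A y) = rdot (iter (k + n) A x) y.
Proof.
elim: n k => [|n IH] k; first by rewrite addn0.
by rewrite iterS -rdotA -iterS IH addSnnS.
Qed.

Definition moment z k := rdot (iter k A z) z.

Lemma moment_double z m : moment z (m + m) = sqnorm (iter m A z).
Proof. by rewrite /moment /sqnorm rdot_iterA. Qed.

Lemma moment_doubleS z m : moment z (m + m).+1 = qf (iter m A z).
Proof. by rewrite /moment /qf -iterS rdot_iterA addSn. Qed.

Lemma moment_ge0 z k : 0 <= moment z k.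
Proof.
have [m [->|->]] := even_or_odd k.
  by rewrite moment_double sqnorm_ge0.
by rewrite moment_doubleS qf_ge0.
Qed.

Lemma moment_nonincr z k : moment z k.+1 <= moment z k.
Proof.
have [m [->|->]] := even_or_odd k.
  by rewrite moment_doubleS moment_double qf_le_sqnorm.
rewrite moment_doubleS -addnS -addSn moment_double.
by rewrite iterS sqnormA_le_qf.
Qed.

Lemma sqnorm_iterA_sub z m n : sqnorm (iter m A z - iter n A z) =
  moment z (m + m) - 2 * moment z (m + n) + moment z (n + n).
Proof. by rewrite /sqnorm !rdotE /moment !rdot_iterA (addnC n m); lra. Qed.

Lemma iterA_cauchy z : sqnorm_cauchy (fun n => iter n A z).
Proof.
move=> e e0; have e20 : 0 < e / 2 by rewrite divr_gt0.
have [K hK] := nonincreasing_cauchy (moment_nonincr z) (moment_ge0 z) e20.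
exists K => m n Km Kn; rewrite sqnorm_iterA_sub.
have := hK _ (m + n)%N (leq_trans Km (leq_addr m m)) (leq_trans Km (leq_addr n m)).
have := hK _ (m + n)%N (leq_trans Kn (leq_addr n n)) (leq_trans Km (leq_addr n m)).
lra.
Qed.

Lemma iterA_cvg_fixed z v : sqnorm_cvg (fun n => iter n A z) v -> A v = v.
Proof.
move=> hv; apply/eqP; rewrite -subr_eq0; apply/eqP/eq0_of_sqnorm_le => e e0.
have [|K hK] := hv (e / 4); first by rewrite divr_gt0.
have -> : A v - v = A (v - iter K A z) + (iter K.+1 A z - v).
  by rewrite linearB iterS addrA subrK.
have := sqnormD_le (A (v - iter K A z)) (iter K.+1 A z - v).
have := sqnormA_le (v - iter K A z); rewrite sqnormBC.
have := hK K (leqnn K); have := hK K.+1 (leqnSn K).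
lra.
Qed.

Lemma A_fixed_kerB v : A v = v -> B v = 0.
Proof. by move=> Av; apply: sqnorm_eq0; rewrite sqnorm_B /qf Av subrr. Qed.

Lemma iterA_sub_range y n : exists w, y - iter n A y = Bs w.
Proof.
elim: n => [|n [w IH]]; first by exists 0; rewrite subrr linear0.
exists (w + B (iter n A y)).
by rewrite linearD -IH iterS A_def opprB addrA addrAC.
Qed.

Lemma qf_Bs_le c z : mu * c <= 1 -> (forall y, qf y <= c * sqnorm y) ->
  qf (Bs z) <= mu * c * sqnorm (Bs z).
Proof.
move=> muc1 hc.
have -> : qf (Bs z) = mu * (qf z - mu * sqnorm (A z)).
  by rewrite /qf A_Bs rdotZl rdot_adjV B_Bs rdotBr rdotZr.
have -> : sqnorm (Bs z) = sqnorm z - mu * qf z.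
  by rewrite /sqnorm rdot_adjV B_Bs rdotBr rdotZr (rdotC z (A z)).
(* The slack is mu (1 - mu c) (c |z|^2 - <Az, z>) + mu^2 |c z - Az|^2. *)
have : 0 <= mu * ((1 - mu * c) * (c * sqnorm z - qf z)).
  by rewrite !mulr_ge0 ?(ltW mu_gt0) ?subr_ge0 ?hc.
have : 0 <= mu * (mu * sqnorm (c%:C *: z - A z)).
  by rewrite !mulr_ge0 ?(ltW mu_gt0) ?sqnorm_ge0.
have -> : sqnorm (c%:C *: z - A z) = c ^+ 2 * sqnorm z - 2 * c * qf z + sqnorm (A z).
  by rewrite /sqnorm /qf !rdotE (rdotC z (A z)); lra.
lra.
Qed.

Lemma qf_le_of_approx (P : R) y : 0 <= P ->
  (forall d, 0 < d -> exists2 r, sqnorm r < d & qf (y - r) <= P * sqnorm (y - r)) ->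
  qf y <= P * sqnorm y.
Proof.
move=> P0 approx; set z := P%:C *: y - A y.
suff : qf y - P * sqnorm y <= 0 by lra.
apply: (@ler_addgt0Mr _ _ _ (sqnorm z)) => t t0; rewrite add0r.
apply: (@ler_addgt0Mr _ _ _ ((1 + t * P) / t)) => d d0.
have [r rd hr] := approx d d0.
(* Polarization of the form P |x|^2 - <Ax, x> at y = (y - r) + r. *)
have -> : qf y - P * sqnorm y =
    qf (y - r) - P * sqnorm (y - r) - 2 * rdot z r - qf r + P * sqnorm r.
  rewrite /qf /sqnorm /z linearB !rdotE (rdotA r y) (rdotC r y) (rdotC r (A y)); lra.
rewrite -(ler_pM2l t0) [leRHS]mulrDr [t * (d * _)]mulrCA [t * (_ / t)]mulrC divfK ?gt_eqF //.
have := ler_wpM2l (ltW t0) hr.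
have := ler_wpM2l (ltW t0) (ler_norm (- rdot z r)); rewrite normrN.
have := rdot_le z r t0.
have : 0 <= t * qf r by rewrite mulr_ge0 ?qf_ge0 ?ltW.
have : 0 <= (d - sqnorm r) * (1 + t * P).
  by rewrite mulr_ge0 ?subr_ge0 ?(ltW rd) // addr_ge0 // mulr_ge0 // ltW.
lra.
Qed.

Section Injective.
Hypothesis hcomp : hcomplete ip.
Hypothesis B_inj : forall x, B x = 0 -> x = 0.

Lemma iterA_vanish z e : 0 < e -> exists n, sqnorm (iter n A z) < e.
Proof.
move=> e0; have [v hv] := hcomplete_cvg hcomp (iterA_cauchy z).
have v0 : v = 0 := B_inj (A_fixed_kerB (iterA_cvg_fixed hv)).
have [K hK] := hv e e0; exists K.
by have := hK K (leqnn K); rewrite v0 subr0.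
Qed.

Lemma qf_le_contract c : 0 <= c -> mu * c <= 1 ->
  (forall y, qf y <= c * sqnorm y) -> forall y, qf y <= mu * c * sqnorm y.
Proof.
move=> c0 muc1 hc y; apply: qf_le_of_approx => [|d d0].
  exact: mulr_ge0 (ltW mu_gt0) c0.
have [n hn] := iterA_vanish y d0.
have [w hw] := iterA_sub_range y n.
by exists (iter n A y); rewrite // hw; apply: qf_Bs_le.
Qed.

Lemma qf_le_expr k y : qf y <= mu ^+ k * sqnorm y.
Proof.
elim: k y => [|k IH] y; first by rewrite expr0 mul1r qf_le_sqnorm.
rewrite exprS; apply: qf_le_contract => //; first by rewrite exprn_ge0 ?ltW.
by rewrite -exprS exprn_ile1 ?ltW.
Qed.

Lemma A_eq0 x : A x = 0.
Proof.
apply: sqnorm_eq0; apply/eqP; rewrite eq_le sqnorm_ge0 andbT.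
exact: le_trans (sqnormA_le_qf x) (le0_of_le_expr mu_gt0 mu_lt1 (qf_le_expr ^~ x)).
Qed.

End Injective.

Lemma kerB_eq0_iff_A_eq0 : hcomplete ip ->
  (forall x, B x = 0 -> x = 0) <-> (forall x, A x = 0).
Proof.
move=> hcomp; split => [B_inj | A0 x Bx0]; first exact: A_eq0.
by rewrite -(A_BsB x) A0 Bx0 linear0 addr0.
Qed.

End Operators.
End RealInnerProduct.

Theorem lemma1p5 (R : realType) (V : lmodType R[i]) (ip : V -> V -> R[i])
  (hH : is_hilbert ip) (mu : R) (hmu0 : 0 < mu) (hmu1 : mu < 1)
  (A B Bs : V -> V)
  (hA : bounded_op ip A) (hB : bounded_op ip B) (hBs : bounded_op ip Bs)
  (hadj : is_adjoint ip B Bs) (hApos : positive_op ip A)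
  (hcomm : forall x : V, B (Bs x) - Bs (B x) = ((1 - mu)%:C)%C *: A x)
  (hsum : forall x : V, A x + Bs (B x) = x) :
  (forall x : V, B x = 0 -> x = 0) <-> (forall x : V, A x = 0).
Proof.
have [ipP hcomp] := hH.
pose lin f (hf : bounded_op ip f) : {linear V -> V} :=
  HB.pack f (GRing.isLinear.Build _ _ _ _ f (proj1 hf)).
exact: (@kerB_eq0_iff_A_eq0 _ _ _ ipP mu (lin A hA) (lin B hB) (lin Bs hBs)).
Qed.
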